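(* $\mathcal{I}_{\mathrm{id}}\subsetneq\mathrm{HDZ}$; that is, every set in the Yorioka ideal $\mathcal{I}_{\mathrm{id}}$ has Hausdorff dimension $0$, and there is a subset of $2^\omega$ of Hausdorff dimension $0$ not belonging to $\mathcal{I}_{\mathrm{id}}$.
   Context: $2^\omega$ carries the metric $d(x,y)=2^{-\min\{n:x(n)\neq y(n)\}}$ for $x\neq y$ and $d(x,x)=0$. For $A\subseteq 2^\omega$, $s>0$: $\mathcal{H}^s(A)=\lim_{\delta\to0}\inf\{\sum_n(\operatorname{diam}C_n)^s:A\subseteq\bigcup_nC_n,\ \operatorname{diam}C_n\le\delta\}$, $\dim_H(A)=\inf\{s>0:\mathcal{H}^s(A)=0\}$, and $\mathrm{HDZ}=\{A\subseteq2^\omega:\dim_H(A)=0\}$. For $\sigma\in(2^{<\omega})^\omega$, let $(\operatorname{ht}\sigma)(n)=|\sigma(n)|$ and $[\sigma]_\infty=\{x\in2^\omega:\exists^\infty n\ \sigma(n)\subseteq x\}$. For $g\in\omega^\omega$, $\mathcal{J}_g=\{A\subseteq2^\omega:\exists\sigma\in(2^{<\omega})^\omega\,(\operatorname{ht}\sigma=g\wedge A\subseteq[\sigma]_\infty)\}$. For $f,g\in\omega^\omega$, $f\ll g$ iff for every $k\in\omega$, $f(n^k)\le g(n)$ for all but finitely many $n$. For increasing $f\in\omega^\omega$, the Yorioka ideal is $\mathcal{I}_f=\bigcup_{g\gg f}\mathcal{J}_g$; $\mathrm{id}$ is the identity function on $\omega$. *)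

From HB Require Import structures.
From mathcomp Require Import all_boot all_order all_algebra.
From mathcomp Require Import all_classical all_reals all_analysis.
Set Implicit Arguments. Unset Strict Implicit. Unset Printing Implicit Defensive.
Import Order.TTheory GRing.Theory Num.Theory.
Local Open Scope classical_set_scope.
Local Open Scope ring_scope.

Definition cantor := nat -> bool.

Section Hausdorff.
Variable R : realType.

Definition cantor_dist (x y : cantor) : R :=
  match pselect (exists n, x n != y n) with
  | left h => 2 ^- (ex_minn h)
  | right _ => 0
  end.

(* diameter (sup of the distances; 0 for the empty set) *)
Definition diam (C : set cantor) : R :=
  sup [set cantor_dist x y | x in C & y in C].

Definition hmeas_delta (s delta : R) (A : set cantor) : \bar R :=
  ereal_inf [set (\sum_(n <oo) ((diam (C n)) `^ s)%:E)%E
            | C in [set C : nat -> set cantor |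
                      A `<=` \bigcup_n C n /\ forall n, diam (C n) <= delta]].

(* H^s(A) = lim_{delta -> 0+} H^s_delta(A); as H^s_delta is nonincreasing in
   delta, this limit is the supremum over delta > 0. *)
Definition hmeas (s : R) (A : set cantor) : \bar R :=
  ereal_sup [set hmeas_delta s delta A | delta in [set delta : R | 0 < delta]].

Definition hdim (A : set cantor) : \bar R :=
  ereal_inf [set s%:E | s in [set s : R | 0 < s /\ hmeas s A = 0%E]].

Definition HDZ (A : set cantor) : Prop := hdim A = 0%E.

End Hausdorff.

Definition is_prefix (t : seq bool) (x : cantor) : Prop :=
  forall i, (i < size t)%N -> x i = nth false t i.

Definition inf_often (sigma : nat -> seq bool) : set cantor :=
  [set x | forall m, exists2 n, (m <= n)%N & is_prefix (sigma n) x].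

Definition J_ideal (g : nat -> nat) (A : set cantor) : Prop :=
  exists sigma : nat -> seq bool,
    (forall n, size (sigma n) = g n) /\ A `<=` inf_often sigma.

Definition much_less (f g : nat -> nat) : Prop :=
  forall k, exists N, forall n, (N <= n)%N -> (f (n ^ k) <= g n)%N.

Definition Yorioka (f : nat -> nat) (A : set cantor) : Prop :=
  exists g, much_less f g /\ J_ideal g A.

From mathcomp Require Import all_boot all_order all_algebra.
From mathcomp Require Import all_classical all_reals all_analysis.
From mathcomp Require Import zify.
Import Order.TTheory GRing.Theory Num.Theory.
Local Open Scope classical_set_scope.
Local Open Scope ring_scope.

(* A set of sequences sharing their first L bits has diameter at most 2^-L,
   so dim_H A = 0 as soon as, for every s > 0 and L, A has covers by sets with
   common prefixes of length L whose sums of s-th powers of diameters are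
   arbitrarily small.
   A set in J_g with g n >= n is covered by the extensions of sigma(n + m),
   n in omega, of total weight at most sum_n 2^(-s(n + m)).
   The sequences vanishing off the squares are covered by 2^m cylinders of
   length m^2, of total weight (2 * 2^(-s m))^m -> 0.  They escape J_g as soon
   as g n > n^2 eventually, which holds for g >> id: flipping bit n^2 of
   sigma(n) for every n gives a square-supported sequence extending sigma(n)
   for no large n. *)

Definition agree_below (L : nat) (C : set cantor) : Prop :=
  forall x y, C x -> C y -> forall i, (i < L)%N -> x i = y i.

Lemma agree_belowW {L L' : nat} {C : set cantor} :
  agree_below L' C -> (L <= L')%N -> agree_below L C.
Proof. by move=> hC LL' x y Cx Cy i iL; apply: hC => //; apply: leq_trans LL'. Qed.

Lemma agree_below_prefix (t : seq bool) : agree_below (size t) (is_prefix t).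
Proof. by move=> x y tx ty i it; rewrite tx ?ty. Qed.

Section CantorDiameter.
Context {R : realType}.

Lemma cantor_dist_ge0 x y : 0 <= cantor_dist R x y.
Proof. by rewrite /cantor_dist; case: pselect => // _; rewrite invr_ge0 exprn_ge0. Qed.

Lemma cantor_dist_le_expVn L x y :
  (forall i, (i < L)%N -> x i = y i) -> cantor_dist R x y <= 2 ^- L.
Proof.
move=> xy; rewrite /cantor_dist.
case: pselect => h; last by rewrite invr_ge0 exprn_ge0.
case: ex_minnP => n /eqP xyn _.
have Ln : (L <= n)%N by rewrite leqNgt; apply/negP => /xy.
by rewrite -!exprVn ler_wiXn2l // ?invr_ge0 ?invf_le1 ?ler1n.
Qed.

Lemma cantor_dist_le1 x y : cantor_dist R x y <= 1.
Proof. by rewrite -[1]invr1 -(expr0 2); apply: cantor_dist_le_expVn. Qed.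

Lemma diam_set0 : diam R set0 = 0.
Proof.
rewrite /diam (_ : [set _ | _ in _ & _ in _] = set0) ?sup0 //.
by apply/seteqP; split => // z [a []].
Qed.

Lemma diam_ge0 C : 0 <= diam R C.
Proof.
rewrite /diam; set D := [set _ | _ in _ & _ in _].
have [->|/set0P[z Dz]] := eqVneq D set0; first by rewrite sup0.
have supD : has_sup D.
  by split; [exists z | exists 1 => w [a _ [b _ <-]]; apply: cantor_dist_le1].
apply: le_trans (sup_upper_bound supD Dz).
by case: Dz => a _ [b _ <-]; apply: cantor_dist_ge0.
Qed.

Lemma diam_le_expVn {L : nat} {C : set cantor} :
  agree_below L C -> diam R C <= 2 ^- L.
Proof.
move=> CL; rewrite /diam; set D := [set _ | _ in _ & _ in _].
have [->|/set0P D0] := eqVneq D set0; first by rewrite sup0 invr_ge0 exprn_ge0.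
by apply: ge_sup => // w [a Ca [b Cb <-]]; apply: cantor_dist_le_expVn; apply: CL.
Qed.

Lemma powR_exprn (a s : R) n : 0 <= a -> (a ^+ n) `^ s = (a `^ s) ^+ n.
Proof.
by move=> a0; rewrite -powR_mulrn // -powRrM mulrC powRrM powR_mulrn // powR_ge0.
Qed.

Lemma powR_half_gt0_lt1 {s : R} : 0 < s -> 0 < 2^-1 `^ s < 1.
Proof.
move=> s0; rewrite powR_gt0 ?invr_gt0 //=.
have := @gt0_ltr_powR R s s0 2^-1 1; rewrite powR1.
by apply; rewrite ?nnegrE ?invr_ge0 // invf_lt1 // ltr1n.
Qed.

Lemma powR_diam_le (s : R) L C :
  0 < s -> agree_below L C -> diam R C `^ s <= (2^-1 `^ s) ^+ L.
Proof.
move=> s0 CL; rewrite -powR_exprn ?invr_ge0 // exprVn.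
rewrite ge0_ler_powR ?nnegrE ?diam_ge0 ?invr_ge0 ?exprn_ge0 ?(ltW s0) //.
exact: diam_le_expVn.
Qed.

End CantorDiameter.

Lemma exprn_eventually_le {R : realType} {q c : R} :
  0 <= q < 1 -> 0 < c -> exists N, forall n, (N <= n)%N -> q ^+ n <= c.
Proof.
move=> /andP[q0 q1] c0.
have nq1 : `|q| < 1 by rewrite ger0_norm.
have /cvgr_dist_lt /(_ _ c0) [N _ qN] := cvg_expr nq1.
exists N => n Nn; have := qN n Nn.
by rewrite /= sub0r normrN ger0_norm ?exprn_ge0 // => /ltW.
Qed.

Section HausdorffZero.
Context {R : realType}.
Local Open Scope ereal_scope.

Lemma nneseries_le_geometric (q : R) m (F : nat -> R) : (0 < q < 1)%R ->
  (forall n, 0 <= F n <= q ^+ (n + m)%N)%R ->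
  \sum_(n <oo) (F n)%:E <= (q ^+ m / (1 - q))%:E.
Proof.
move=> /andP[q0 q1] F_bounds.
apply: lime_le.
  by apply: is_cvg_nneseries => n _ _; rewrite lee_fin; case/andP: (F_bounds n).
apply: nearW => k; rewrite sumEFin lee_fin.
apply: le_trans (geometric_le_lim k (exprn_ge0 m (ltW q0)) q0 _); last first.
  by rewrite ger0_norm // ltW.
rewrite seriesEnat /=; apply: ler_sum => i _.
by case/andP: (F_bounds i) => _; rewrite exprD mulrC.
Qed.

Lemma nneseries_powR_diam_nth (s : R) (S : seq (set cantor)) : (0 < s)%R ->
  \sum_(n <oo) ((diam R (nth set0 S n)) `^ s)%:E = (\sum_(C <- S) diam R C `^ s)%:E.
Proof.
move=> s0; have F0 k : (0 <= k)%N -> 0 <= ((diam R (nth set0 S k)) `^ s)%:E.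
  by move=> _; rewrite lee_fin powR_ge0.
rewrite (nneseries_split 0 (size S) F0) add0n eseries0 ?adde0; last first.
  by move=> k Sk _; rewrite nth_default // diam_set0 powR0 // gt_eqF.
by rewrite sumEFin (big_nth set0).
Qed.

Lemma hmeas_eq0_of_covers (s : R) (A : set cantor) :
  (forall delta eps : R, (0 < delta)%R -> (0 < eps)%R ->
     exists C : nat -> set cantor, [/\ A `<=` \bigcup_n C n,
       forall n, (diam R (C n) <= delta)%R &
       \sum_(n <oo) ((diam R (C n)) `^ s)%:E <= eps%:E]) ->
  hmeas s A = 0.
Proof.
move=> covers.
have hmeas_delta0 delta : (0 < delta)%R -> hmeas_delta s delta A = 0.
  move=> delta0; apply/eqP; rewrite eq_le; apply/andP; split.
    apply/lee_addgt0Pr => eps eps0; rewrite add0e.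
    have [C [AC Cdelta Ceps]] := covers delta eps delta0 eps0.
    apply: ge_ereal_inf; exists (\sum_(n <oo) ((diam R (C n)) `^ s)%:E) => //.
    by exists C.
  apply: le_ereal_inf_tmp => _ [C _ <-].
  by apply: nneseries_ge0 => n _ _; rewrite lee_fin powR_ge0.
apply/eqP; rewrite eq_le; apply/andP; split.
  by apply: ge_ereal_sup => _ [delta delta0 <-]; rewrite hmeas_delta0.
rewrite -(hmeas_delta0 1%R ltr01).
by apply: ereal_sup_ubound; exists 1%R => //; apply: ltr01.
Qed.

Lemma HDZ_of_hmeas_eq0 (A : set cantor) :
  (forall s : R, (0 < s)%R -> hmeas s A = 0) -> HDZ R A.
Proof.
move=> hmeas0; apply/eqP; rewrite eq_le; apply/andP; split.
  apply/lee_addgt0Pr => eps eps0; rewrite add0e.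
  apply: ge_ereal_inf; exists eps%:E => //.
  by exists eps => //; split => //; apply: hmeas0.
by apply: le_ereal_inf_tmp => _ [s [s0 _] <-]; rewrite lee_fin ltW.
Qed.

Lemma HDZ_of_fine_covers (A : set cantor) :
  (forall s eps : R, (0 < s)%R -> (0 < eps)%R -> forall L,
     exists C : nat -> set cantor, [/\ A `<=` \bigcup_n C n,
       forall n, agree_below L (C n) &
       \sum_(n <oo) ((diam R (C n)) `^ s)%:E <= eps%:E]) ->
  HDZ R A.
Proof.
move=> covers; apply: HDZ_of_hmeas_eq0 => s s0.
apply: hmeas_eq0_of_covers => delta eps delta0 eps0.
have half01 : (0 <= (2 : R)^-1 < 1)%R.
  by rewrite invr_ge0 ler0n invf_lt1 // (ltr_nat R 1 2).
have [L halfL] := exprn_eventually_le half01 delta0.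
have [C [AC CL Ceps]] := covers s eps s0 eps0 L.
exists C; split => // n.
by apply: le_trans (diam_le_expVn (CL n)) _; rewrite -exprVn halfL.
Qed.

End HausdorffZero.

Lemma J_ideal_HDZ (R : realType) (g : nat -> nat) (A : set cantor) :
  (exists N, forall n, (N <= n)%N -> (n <= g n)%N) -> J_ideal g A -> HDZ R A.
Proof.
move=> [N g_ge] [sigma [size_sigma A_sigma]].
apply: HDZ_of_fine_covers => s eps s0 eps0 L.
have /andP[q0 q1] := powR_half_gt0_lt1 s0; set q := 2^-1 `^ s in q0 q1.
have q01 : 0 <= q < 1 by rewrite ltW.
have eps_q : 0 < eps * (1 - q) by rewrite mulr_gt0 ?subr_gt0.
have [M qM] := exprn_eventually_le q01 eps_q.
pose m := maxn L (maxn N M).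
have sigma_agree n : agree_below (n + m)%N (is_prefix (sigma (n + m)%N)).
  apply: agree_belowW (agree_below_prefix _) _; rewrite size_sigma.
  by apply: leq_trans (g_ge _ _); lia.
exists (fun n => is_prefix (sigma (n + m)%N)); split.
- move=> x /A_sigma /(_ m) [n mn x_sigma]; exists (n - m)%N => //=.
  by rewrite subnK.
- by move=> n /=; apply: (agree_belowW (sigma_agree n)); lia.
- apply: le_trans (nneseries_le_geometric q m
    (fun n => diam R (is_prefix (sigma (n + m)%N)) `^ s) _ _) _.
  + by rewrite q0 q1.
  + by move=> n; rewrite powR_ge0 /=; apply: powR_diam_le.
  + by rewrite lee_fin ler_pdivrMr ?subr_gt0 // qM //; lia.
Qed.

Definition square_supported : set cantor :=
  [set x | forall i, ~ (exists j, (j * j)%N = i) -> x i = false].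

Lemma has_iota_sqr (P : pred nat) n :
  has (fun j => (j * j == n * n)%N && P j) (iota 0 (n * n).+1) = P n.
Proof.
apply/hasP/idP => [[j _ /andP[/eqP jn Pj]] | Pn].
  by have /eqP <- : j == n by rewrite -eqn_sqr !expnS expn0 !muln1 jn.
by exists n; rewrite ?eqxx // mem_iota add0n ltnS; nia.
Qed.

Lemma square_supported_notin_J (g : nat -> nat) :
  (exists N, forall n, (N <= n)%N -> (n * n < g n)%N) ->
  ~ J_ideal g square_supported.
Proof.
move=> [N g_gt] [sigma [size_sigma sq_sigma]].
pose x : cantor := fun i =>
  has (fun j => (j * j == i)%N && ~~ nth false (sigma j) i) (iota 0 i.+1).
have x_sq : square_supported x.
  move=> i not_sq; apply/negbTE/hasP => -[j _ /andP[/eqP ji _]].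
  by apply: not_sq; exists j.
have [n Nn x_sigma] := sq_sigma x x_sq N.
have := x_sigma (n * n)%N; rewrite size_sigma g_gt // /x has_iota_sqr.
by case: nth => /(_ isT).
Qed.

Definition square_code {m : nat} (f : {ffun 'I_m -> bool}) (i : nat) : bool :=
  [exists j : 'I_m, (j * j == i)%N && f j].

Definition square_cylinder {m : nat} (f : {ffun 'I_m -> bool}) : set cantor :=
  [set x | forall i, (i < m * m)%N -> x i = square_code f i].

Lemma agree_below_square_cylinder m (f : {ffun 'I_m -> bool}) :
  agree_below (m * m)%N (square_cylinder f).
Proof. by move=> x y fx fy i im; rewrite fx ?fy. Qed.

Lemma square_supported_cylinder m x :
  square_supported x -> square_cylinder [ffun j : 'I_m => x (j * j)%N] x.
Proof.
move=> x_sq i im; rewrite /square_code; case xi: (x i); apply/esym.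
  have [j ji] : exists j, (j * j)%N = i.
    by apply: contrapT => not_sq; move: xi; rewrite x_sq.
  have jm : (j < m)%N.
    by apply: contraTT im; rewrite -!leqNgt -ji => mj; apply: leq_mul.
  by apply/existsP; exists (Ordinal jm); rewrite /= ffunE ji xi eqxx.
apply/negbTE; rewrite negb_exists; apply/forallP => j.
by apply/negP => /andP[/eqP ji]; rewrite ffunE ji xi.
Qed.

Lemma square_supported_HDZ (R : realType) : HDZ R square_supported.
Proof.
apply: HDZ_of_fine_covers => s eps s0 eps0 L.
have /andP[q0 q1] := powR_half_gt0_lt1 s0; set q := 2^-1 `^ s in q0 q1.
have q01 : 0 <= q < 1 by rewrite ltW.
have eps2 : 0 < Num.min eps 1 / 2 by rewrite divr_gt0 // lt_min eps0 ltr01.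
have [M qM] := exprn_eventually_le q01 eps2.
pose m := maxn 1 (maxn L M).
pose E := enum {ffun 'I_m -> bool}.
exists (nth set0 [seq square_cylinder f | f <- E]); split.
- move=> x x_sq; pose f := [ffun j : 'I_m => x (j * j)%N].
  have Ef : f \in E by rewrite mem_enum.
  exists (index f E) => //.
  by rewrite (nth_map f) ?index_mem // nth_index //; apply: square_supported_cylinder.
- move=> n; have [nE|nE] := ltnP n (size E); last first.
    by rewrite nth_default; [move=> x y [] | rewrite size_map].
  rewrite (nth_map [ffun=> false]) //.
  by apply: (agree_belowW (agree_below_square_cylinder _ _)); nia.
- rewrite nneseries_powR_diam_nth // big_map lee_fin.
  apply: le_trans (_ : \sum_(f <- E) q ^+ (m * m)%N <= _).
    apply: ler_sum => f _; apply: powR_diam_le => //.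
    exact: agree_below_square_cylinder.
  rewrite big_enum /= sumr_const card_ffun card_bool card_ord.
  rewrite -mulr_natr natrX exprM -exprMn.
  have qm2 : q ^+ m * 2 <= Num.min eps 1 by rewrite -ler_pdivlMr // qM //; lia.
  have qm2_ge0 : 0 <= q ^+ m * 2 by rewrite mulr_ge0 // exprn_ge0 // ltW.
  apply: le_trans (_ : q ^+ m * 2 <= _).
    rewrite -[leRHS]expr1 ler_wiXn2l //; last by lia.
    by apply: le_trans qm2 _; rewrite ge_min lexx orbT.
  by apply: le_trans qm2 _; rewrite ge_min lexx.
Qed.

Lemma much_less_id_ge (g : nat -> nat) :
  much_less id g -> exists N, forall n, (N <= n)%N -> (n <= g n)%N.
Proof. by move=> /(_ 1%N) [N gN]; exists N => n /gN; rewrite expn1. Qed.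

Lemma much_less_id_gt_sqr (g : nat -> nat) :
  much_less id g -> exists N, forall n, (N <= n)%N -> (n * n < g n)%N.
Proof.
move=> /(_ 3%N) [N gN]; exists (maxn N 2) => n Nn.
by apply: leq_trans (gN n _); rewrite /=; nia.
Qed.

Theorem theorem3p7 (R : realType) :
  (forall A : set cantor, Yorioka id A -> HDZ R A) /\
  (exists A : set cantor, HDZ R A /\ ~ Yorioka id A).
Proof.
split.
  by move=> A [g [/much_less_id_ge g_ge JgA]]; apply: J_ideal_HDZ JgA.
exists square_supported; split; first exact: square_supported_HDZ.
by move=> [g [/much_less_id_gt_sqr g_gt]]; apply: square_supported_notin_J.
Qed.
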